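(* Let $G$ and $H$ be non-archimedean topological groups and suppose $H$ is a $G$-group. Then the topological semidirect product $H\rtimes G$ is non-archimedean.
   Context: A topological group is non-archimedean if it has a local base at the identity consisting of open subgroups. $H$ is a $G$-group if there is a continuous action $G\times H\to H$ such that each translation $h\mapsto gh$ is a group automorphism of $H$. $H\rtimes G$ is $H\times G$ with the product topology and multiplication $(h_1,g_1)(h_2,g_2)=(h_1\cdot g_1h_2,\ g_1g_2)$. *)

From Stdlib Require Import Classical.

Set Implicit Arguments.

Definition is_topology (T : Type) (op : (T -> Prop) -> Prop) : Prop :=
  op (fun _ => True) /\
  (forall (I : Type) (F : I -> T -> Prop),
      (forall i, op (F i)) -> op (fun x => exists i, F i x)) /\
  (forall A B, op A -> op B -> op (fun x => A x /\ B x)).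

Definition prod_open (A B : Type) (opA : (A -> Prop) -> Prop)
  (opB : (B -> Prop) -> Prop) (U : A * B -> Prop) : Prop :=
  forall p, U p -> exists (V : A -> Prop) (W : B -> Prop),
    opA V /\ opB W /\ V (fst p) /\ W (snd p) /\
    (forall a b, V a -> W b -> U (a, b)).

Definition continuous (A B : Type) (opA : (A -> Prop) -> Prop)
  (opB : (B -> Prop) -> Prop) (f : A -> B) : Prop :=
  forall U, opB U -> opA (fun x => U (f x)).

Record group_top := GroupTop {
  gcar :> Type;
  gmul : gcar -> gcar -> gcar;
  ginv : gcar -> gcar;
  gone : gcar;
  gopen : (gcar -> Prop) -> Prop
}.

Definition is_group (G : group_top) : Prop :=
  (forall x y z, gmul G x (gmul G y z) = gmul G (gmul G x y) z) /\
  (forall x, gmul G (gone G) x = x) /\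
  (forall x, gmul G x (gone G) = x) /\
  (forall x, gmul G (ginv G x) x = gone G) /\
  (forall x, gmul G x (ginv G x) = gone G).

Definition is_topological_group (G : group_top) : Prop :=
  is_group G /\ is_topology (gopen G) /\
  continuous (prod_open (gopen G) (gopen G)) (gopen G)
    (fun p => gmul G (fst p) (snd p)) /\
  continuous (gopen G) (gopen G) (ginv G).

Definition is_subgroup (G : group_top) (V : G -> Prop) : Prop :=
  V (gone G) /\ (forall x y, V x -> V y -> V (gmul G x y)) /\
  (forall x, V x -> V (ginv G x)).

Definition non_archimedean (G : group_top) : Prop :=
  is_topological_group G /\
  forall U : G -> Prop, gopen G U -> U (gone G) ->
    exists V : G -> Prop, is_subgroup G V /\ gopen G V /\
      (forall x, V x -> U x).

Definition is_G_group (G H : group_top) (act : G -> H -> H) : Prop :=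
  continuous (prod_open (gopen G) (gopen H)) (gopen H)
    (fun p => act (fst p) (snd p)) /\
  (forall h, act (gone G) h = h) /\
  (forall g1 g2 h, act (gmul G g1 g2) h = act g1 (act g2 h)) /\
  (forall g h1 h2, act g (gmul H h1 h2) = gmul H (act g h1) (act g h2)) /\
  (forall g, (forall h1 h2, act g h1 = act g h2 -> h1 = h2) /\
             (forall h, exists h', act g h' = h)).

Definition semidirect (G H : group_top) (act : G -> H -> H) : group_top :=
  @GroupTop (gcar H * gcar G)
    (fun p q => (gmul H (fst p) (act (snd p) (fst q)), gmul G (snd p) (snd q)))
    (fun p => (act (ginv G (snd p)) (ginv H (fst p)), ginv G (snd p)))
    (gone H, gone G)
    (prod_open (gopen H) (gopen G)).

Arguments is_G_group : clear implicits.
Arguments semidirect : clear implicits.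

From Stdlib Require Import FunctionalExtensionality PropExtensionality.

(** Let [U] be an open neighbourhood of [(1, 1)] in [H ⋊ G] containing a box
    [V × W], and [L ⊆ V] an open subgroup of [H].  Continuity of the action at
    [(1, 1)] gives neighbourhoods [K1] of [1] in [G] and [B] of [1] in [H] with
    [K1 · B ⊆ L].  For an open subgroup [K ⊆ K1 ∩ W] of [G], the set [M] of
    those [h] with [K · h ⊆ L] is a [K]-invariant subgroup of [L] containing
    [B], hence open, and [M × K] is an open subgroup of [H ⋊ G] inside [U]. *)

Lemma open_setI (T : Type) (op : (T -> Prop) -> Prop) (A B : T -> Prop) :
  is_topology op -> op A -> op B -> op (fun x => A x /\ B x).
Proof. intros [_ [_ HI]]; apply HI. Qed.

Lemma open_of_locally_open (T : Type) (op : (T -> Prop) -> Prop) (S : T -> Prop) :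
  is_topology op ->
  (forall x, S x -> exists W, op W /\ W x /\ forall y, W y -> S y) -> op S.
Proof.
  intros [_ [HU _]] Hloc.
  set (I := {W : T -> Prop | op W /\ forall y, W y -> S y}).
  assert (ES : S = (fun x => exists i : I, proj1_sig i x)).
  { apply functional_extensionality; intro x; apply propositional_extensionality; split.
    - intro Sx. destruct (Hloc x Sx) as [W [oW [Wx WS]]].
      exists (exist _ W (conj oW WS)); exact Wx.
    - intros [[W [oW WS]] Wx]; auto. }
  rewrite ES. apply HU. intros [W [oW WS]]; exact oW.
Qed.

Lemma prod_open_box (A B : Type) (opA : (A -> Prop) -> Prop) (opB : (B -> Prop) -> Prop)
  (X : A -> Prop) (Y : B -> Prop) :
  opA X -> opB Y -> prod_open opA opB (fun p => X (fst p) /\ Y (snd p)).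
Proof. intros oX oY p [Xp Yp]; exists X, Y; repeat split; auto. Qed.

Lemma prod_topology (A B : Type) (opA : (A -> Prop) -> Prop) (opB : (B -> Prop) -> Prop) :
  is_topology opA -> is_topology opB -> is_topology (prod_open opA opB).
Proof.
  intros [TA [UA IA]] [TB [UB IB]]. split; [|split].
  - intros p _. exists (fun _ => True), (fun _ => True). repeat split; auto.
  - intros I F HF p [i Fip]. destruct (HF i p Fip) as [V [W [oV [oW [Vp [Wp HVW]]]]]].
    exists V, W. repeat split; auto. intros x y Vx Wy. exists i; auto.
  - intros U1 U2 H1 H2 p [U1p U2p].
    destruct (H1 p U1p) as [V1 [W1 [oV1 [oW1 [V1p [W1p HVW1]]]]]].
    destruct (H2 p U2p) as [V2 [W2 [oV2 [oW2 [V2p [W2p HVW2]]]]]].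
    exists (fun x => V1 x /\ V2 x), (fun x => W1 x /\ W2 x).
    split; [|split; [|split; [|split]]]; auto.
    intros x y [? ?] [? ?]; auto.
Qed.

Section TopologicalGroup.
Variable H : group_top.
Hypothesis tH : is_topological_group H.

Lemma open_left_translate (a : H) (U : H -> Prop) :
  gopen H U -> gopen H (fun x => U (gmul H a x)).
Proof.
  destruct tH as [_ [topH [mulH _]]]. intro oU.
  apply open_of_locally_open; auto. intros x Ux.
  destruct (mulH U oU (a, x) Ux) as [V1 [V2 [_ [oV2 [V1a [V2x HV]]]]]].
  exists V2. split; [|split]; auto.
  intros y V2y; exact (HV a y V1a V2y).
Qed.

Lemma subgroup_open_of_nbhs (M B : H -> Prop) :
  is_subgroup H M -> gopen H B -> B (gone H) -> (forall x, B x -> M x) ->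
  gopen H M.
Proof.
  destruct tH as [[aH [lH [_ [liH riH]]]] [topH _]].
  intros [_ [Mmul _]] oB B1 BM.
  apply open_of_locally_open; auto. intros m Mm.
  exists (fun x => B (gmul H (ginv H m) x)). repeat split.
  - apply open_left_translate; auto.
  - rewrite liH; exact B1.
  - intros y By.
    replace y with (gmul H m (gmul H (ginv H m) y)) by (rewrite aH, riH, lH; auto).
    auto.
Qed.

End TopologicalGroup.

Section Action.
Variables (G H : group_top) (act : G -> H -> H).
Hypothesis gG : is_group G.
Hypothesis gH : is_group H.
Hypothesis HA : is_G_group G H act.

Lemma act_one (g : G) : act g (gone H) = gone H.
Proof.
  destruct gH as [aH [lH [_ [liH _]]]]. destruct HA as [_ [_ [_ [hom _]]]].
  assert (Hidem : gmul H (act g (gone H)) (act g (gone H)) = act g (gone H))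
    by (rewrite <- hom, lH; reflexivity).
  rewrite <- (lH (act g (gone H))), <- (liH (act g (gone H))) at 1.
  rewrite <- aH, Hidem. apply liH.
Qed.

Lemma act_inv (g : G) (h : H) : act g (ginv H h) = ginv H (act g h).
Proof.
  destruct gH as [aH [lH [rH [liH riH]]]]. destruct HA as [_ [_ [_ [hom _]]]].
  rewrite <- (rH (act g (ginv H h))), <- (riH (act g h)), aH, <- hom, liH.
  rewrite act_one; apply lH.
Qed.

(** For a subgroup [K], the largest [K]-stable subset of [L]. *)
Definition act_core (K : G -> Prop) (L : H -> Prop) : H -> Prop :=
  fun h => forall k, K k -> L (act k h).

Lemma act_core_subgroup (K : G -> Prop) (L : H -> Prop) :
  is_subgroup H L -> is_subgroup H (act_core K L).
Proof.
  destruct HA as [_ [_ [_ [hom _]]]]. intros [L1 [Lmul Linv]].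
  split; [|split]; unfold act_core.
  - intros k _. rewrite act_one; exact L1.
  - intros x y Mx My k Kk. rewrite hom; auto.
  - intros x Mx k Kk. rewrite act_inv; auto.
Qed.

Lemma act_core_sub (K : G -> Prop) (L : H -> Prop) (h : H) :
  K (gone G) -> act_core K L h -> L h.
Proof.
  destruct HA as [_ [act1 _]]. intros K1 Mh. rewrite <- (act1 h); auto.
Qed.

Lemma act_core_invariant (K : G -> Prop) (L : H -> Prop) (k : G) (h : H) :
  is_subgroup G K -> K k -> act_core K L h -> act_core K L (act k h).
Proof.
  destruct HA as [_ [_ [actM _]]]. intros [_ [Kmul _]] Kk Mh k' Kk'.
  rewrite <- actM; auto.
Qed.

Lemma semidirect_group : is_group (semidirect G H act).
Proof.
  destruct gG as [aG [lG [rG [liG riG]]]], gH as [aH [lH [rH [liH riH]]]].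
  destruct HA as [_ [act1 [actM [hom _]]]].
  split; [|split; [|split; [|split]]].
  - intros [h1 g1] [h2 g2] [h3 g3]; simpl. rewrite hom, actM, aH, aG; reflexivity.
  - intros [h g]; simpl. rewrite act1, lH, lG; reflexivity.
  - intros [h g]; simpl. rewrite act_one, rH, rG; reflexivity.
  - intros [h g]; simpl. rewrite <- hom, liH, liG, act_one; reflexivity.
  - intros [h g]; simpl. rewrite <- actM, riG, act1, riH; reflexivity.
Qed.

Lemma semidirect_mul_continuous :
  is_topological_group G -> is_topological_group H ->
  continuous (prod_open (gopen (semidirect G H act)) (gopen (semidirect G H act)))
    (gopen (semidirect G H act))
    (fun p => gmul (semidirect G H act) (fst p) (snd p)).
Proof.
  intros [_ [topG [mulG _]]] [_ [_ [mulH _]]].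
  destruct HA as [actC _].
  intros U oU [[h1 g1] [h2 g2]] Up; simpl in Up.
  destruct (oU _ Up) as [V [W [oV [oW [Vp [Wp HVW]]]]]]; simpl in Vp, Wp.
  destruct (mulH V oV (h1, act g1 h2) Vp) as [V1 [V2 [oV1 [oV2 [V1p [V2p HV]]]]]].
  destruct (actC V2 oV2 (g1, h2) V2p) as [A [B [oA [oB [Ap [Bp HAB]]]]]].
  destruct (mulG W oW (g1, g2) Wp) as [W1 [W2 [oW1 [oW2 [W1p [W2p HW]]]]]].
  simpl in *.
  exists (fun p => V1 (fst p) /\ A (snd p) /\ W1 (snd p)),
         (fun q => B (fst q) /\ W2 (snd q)).
  repeat split; auto.
  - apply (prod_open_box _ _ _ _ V1 (fun g => A g /\ W1 g)); auto. apply open_setI; auto.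
  - apply prod_open_box; auto.
  - intros [a1 b1] [a2 b2] [Va1 [Ab1 Wb1]] [Ba2 Wb2]; simpl in *.
    apply HVW; simpl; auto.
Qed.

Lemma semidirect_inv_continuous :
  is_topological_group G -> is_topological_group H ->
  continuous (gopen (semidirect G H act)) (gopen (semidirect G H act))
    (ginv (semidirect G H act)).
Proof.
  intros [_ [topG [_ invG]]] [_ [_ [_ invH]]].
  destruct HA as [actC _].
  intros U oU [h g] Up; simpl in Up.
  destruct (oU _ Up) as [V [W [oV [oW [Vp [Wp HVW]]]]]]; simpl in Vp, Wp.
  destruct (actC V oV (ginv G g, ginv H h) Vp) as [A [B [oA [oB [Ap [Bp HAB]]]]]].
  simpl in Ap, Bp.
  exists (fun x => B (ginv H x)), (fun y => A (ginv G y) /\ W (ginv G y)).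
  split; [|split; [|split; [|split]]]; auto.
  - apply (invG (fun y => A y /\ W y)). apply open_setI; auto.
  - intros a b Ba [Ab Wb]. apply HVW; simpl; auto. apply (HAB _ _ Ab Ba).
Qed.

Lemma semidirect_subgroup (M : H -> Prop) (K : G -> Prop) :
  is_subgroup H M -> is_subgroup G K -> (forall k h, K k -> M h -> M (act k h)) ->
  is_subgroup (semidirect G H act) (fun p => M (fst p) /\ K (snd p)).
Proof.
  intros [M1 [Mmul Minv]] [K1 [Kmul Kinv]] MK.
  split; [|split]; simpl; auto.
  - intros [h1 g1] [h2 g2] [Mh1 Kg1] [Mh2 Kg2]; simpl in *; auto.
  - intros [h g] [Mh Kg]; simpl in *; auto.
Qed.

End Action.

Arguments act_core {G H} act K L _.

Lemma invariant_open_subgroups (G H : group_top) (act : G -> H -> H)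
  (L : H -> Prop) (W : G -> Prop) :
  non_archimedean G -> is_topological_group H -> is_G_group G H act ->
  is_subgroup H L -> gopen H L -> gopen G W -> W (gone G) ->
  exists (K : G -> Prop) (M : H -> Prop),
    is_subgroup G K /\ gopen G K /\ (forall g, K g -> W g) /\
    is_subgroup H M /\ gopen H M /\ (forall h, M h -> L h) /\
    (forall k h, K k -> M h -> M (act k h)).
Proof.
  intros [[gG [topG _]] naG] tH HA sL oL oW W1.
  pose proof HA as [actC _].
  destruct (actC L oL (gone G, gone H)) as [K1 [B [oK1 [oB [K1one [Bone HK1B]]]]]].
  { simpl. rewrite (act_one G H act (proj1 tH) HA). apply sL. }
  destruct (naG (fun g => K1 g /\ W g)) as [K [sK [oK KK1W]]];
    [apply open_setI; auto | auto |].
  exists K, (act_core act K L).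
  assert (sM : is_subgroup H (act_core act K L))
    by (apply act_core_subgroup; auto; apply tH).
  split; [exact sK|split; [exact oK|split; [|split; [exact sM|split; [|split]]]]].
  - intros g Kg; apply KK1W; auto.
  - apply (subgroup_open_of_nbhs H tH _ B sM oB Bone).
    intros b Bb k Kk. apply (HK1B k b); auto. apply KK1W; auto.
  - intros h; apply act_core_sub; [exact HA | apply sK].
  - intros k h; apply act_core_invariant; auto.
Qed.

Lemma semidirect_topological_group (G H : group_top) (act : G -> H -> H) :
  is_G_group G H act ->
  is_topological_group G -> is_topological_group H ->
  is_topological_group (semidirect G H act).
Proof.
  intros HA tG tH.
  split; [apply semidirect_group; auto; [apply tG | apply tH]|split; [|split]].
  - apply prod_topology; [apply tH | apply tG].
  - apply semidirect_mul_continuous; auto.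
  - apply semidirect_inv_continuous; auto.
Qed.

Theorem corollary3p4 (G H : group_top) (act : G -> H -> H) :
  non_archimedean G -> non_archimedean H -> is_G_group G H act ->
  non_archimedean (semidirect G H act).
Proof.
  intros naG [tH naH] HA.
  split; [apply semidirect_topological_group; [exact HA | apply naG | exact tH]|].
  intros U oU U1.
  destruct (oU _ U1) as [V [W [oV [oW [V1 [W1 HVW]]]]]].
  destruct (naH V oV V1) as [L [sL [oL LV]]].
  destruct (invariant_open_subgroups G H act L W naG tH HA sL oL oW W1)
    as [K [M [sK [oK [KW [sM [oM [ML MK]]]]]]]].
  exists (fun p => M (fst p) /\ K (snd p)).
  split; [|split].
  - apply semidirect_subgroup; assumption.
  - apply prod_open_box; assumption.
  - intros [h g] [Mh Kg]. apply HVW; auto.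
Qed.
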